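(* Let $(A,* )$ be an involutive associative algebra over a field $\mathbb{K}$ of characteristic $0$. For $n\ge 1$ let $$iC^n_{\mathrm{Hoch}}(A,A)=\{f\in \mathrm{Hom}(A^{\otimes n},A)\mid f(a_1,\ldots,a_n)^*=(-1)^{\frac{(n-1)(n-2)}{2}} f(a_n^*,\ldots,a_1^* )\ \text{for all } a_i\in A\}.$$ If $m,n\ge 1$, $f\in iC^m_{\mathrm{Hoch}}(A,A)$ and $g\in iC^n_{\mathrm{Hoch}}(A,A)$, then the Gerstenhaber bracket $[f,g]$ lies in $iC^{m+n-1}_{\mathrm{Hoch}}(A,A)$.
   Context: An involutive associative algebra is an associative algebra $A$ with a linear map $*:A\to A$, $a\mapsto a^*$, such that $a^{**}=a$ and $(ab)^*=b^*a^*$ for all $a,b\in A$. For $f\in\mathrm{Hom}(A^{\otimes m},A)$, $g\in \mathrm{Hom}(A^{\otimes n},A)$ and $1\le i\le m$, let $(f\circ_i g)(a_1,\ldots,a_{m+n-1})=f(a_1,\ldots,a_{i-1},g(a_i,\ldots,a_{i+n-1}),a_{i+n},\ldots,a_{m+n-1})$. The Gerstenhaber bracket is $[f,g]=\sum_{i=1}^m(-1)^{(i-1)(n-1)}f\circ_i g-(-1)^{(m-1)(n-1)}\sum_{i=1}^n(-1)^{(i-1)(m-1)}g\circ_i f\in \mathrm{Hom}(A^{\otimes (m+n-1)},A)$. *)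

From HB Require Import structures.
From mathcomp Require Import all_boot all_order all_algebra.
Set Implicit Arguments. Unset Strict Implicit. Unset Printing Implicit Defensive.
Import GRing.Theory.
Local Open Scope ring_scope.

Section Hochschild.
Variables (K : fieldType) (A : lmodType K).

(* An element of Hom(A^{(x)n}, A): a map from n-tuples of arguments (indexed by 'I_n) to A. *)
Definition cochain (n : nat) := ('I_n -> A) -> A.

Definition upd n (a : 'I_n -> A) (i : 'I_n) (x : A) : 'I_n -> A :=
  fun j => if j == i then x else a j.

(* K-multilinearity, i.e. f factors through A^{(x)n}. *)
Definition multilinear n (f : cochain n) : Prop :=
  forall (i : 'I_n) (a : 'I_n -> A) (k : K) (x y : A),
    f (upd a i (k *: x + y)) = k *: f (upd a i x) + f (upd a i y).

(* 0-based nat access to an argument family (default 0 out of range; never used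
   out of range in the compositions below when N = m + n - 1). *)
Definition getarg N (a : 'I_N -> A) (k : nat) : A :=
  match insub k with Some j => a j | None => 0 end.

(* Partial composition f o_{i+1} g (i is 0-based, i < m), as an N-ary cochain with N = m+n-1:
   (f o_{i+1} g)(a_0..a_{N-1}) = f(a_0,..,a_{i-1}, g(a_i,..,a_{i+n-1}), a_{i+n},..,a_{N-1}). *)
Definition pcomp (N m n : nat) (f : cochain m) (i : nat) (g : cochain n) : cochain N :=
  fun a => f (fun j : 'I_m =>
    if (j < i)%N then getarg a j
    else if (j == i :> nat) then g (fun l : 'I_n => getarg a (i + l)%N)
    else getarg a (j + n - 1)%N).

Arguments pcomp : clear implicits.
Definition gbracket (m n : nat) (f : cochain m) (g : cochain n) : cochain (m + n - 1)%N :=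
  fun a =>
    \sum_(i < m) ((-1) ^+ (i * (n - 1))%N : K) *: pcomp (m + n - 1)%N m n f i g a
    - ((-1) ^+ ((m - 1) * (n - 1))%N : K) *:
        \sum_(i < n) ((-1) ^+ (i * (m - 1))%N : K) *: pcomp (m + n - 1)%N n m g i f a.

Variable star : A -> A.

Definition iC (n : nat) (f : cochain n) : Prop :=
  multilinear f /\
  forall a : 'I_n -> A,
    star (f a) = ((-1) ^+ ((n.-1 * n.-2) %/ 2)%N : K) *: f (fun j => star (a (rev_ord j))).

End Hochschild.

(* Write e(n) = (n-1)(n-2)/2 for the sign exponent of iC^n.  Applying * to
   (f o_{i+1} g)(a_1, ..., a_N) and using the symmetry of f and then of g turns
   it into (-1)^(e(m)+e(n)) times f o_{m-i} g evaluated at a_N^*, ..., a_1^* in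
   that order.  As e(m+n-1) = e(m) + e(n) + (m-1)(n-1) and
   (m-1)(n-1) = (m-1-i)(n-1) + i(n-1), reindexing i -> m-1-i carries the signs
   (-1)^(i(n-1)) of the circle product f o g = sum_i (-1)^(i(n-1)) f o_{i+1} g
   onto (-1)^e(m+n-1) times themselves, so f o g, g o f and hence [f,g] are
   symmetric. *)

From Pilot Require Import Defs.
From Stdlib Require Import FunctionalExtensionality.
From HB Require Import structures.
From mathcomp Require Import all_boot all_order all_algebra zify.
Import GRing.Theory.
Local Open Scope ring_scope.

Set Implicit Arguments. Unset Strict Implicit. Unset Printing Implicit Defensive.

Definition inv_exp (n : nat) := ((n.-1 * n.-2) %/ 2)%N.

Lemma inv_expE n : inv_exp n = 'C(n.-1, 2).
Proof. by rewrite /inv_exp bin2 divn2. Qed.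

Lemma inv_expD m n : (0 < m)%N -> (0 < n)%N ->
  inv_exp (m + n - 1) = (inv_exp m + inv_exp n + m.-1 * n.-1)%N.
Proof.
move=> m_gt0 n_gt0; rewrite !inv_expE.
have -> : (m + n - 1).-1 = (m.-1 + n.-1)%N by lia.
by rewrite -binomial.Vandermonde !big_ord_recr big_ord0 /= !subn0 !bin0 !bin1; lia.
Qed.

Lemma sign_rev_pcomp (R : pzRingType) m n i :
  (0 < m)%N -> (0 < n)%N -> (i < m)%N ->
  (-1) ^+ inv_exp m * (-1) ^+ inv_exp n * (-1) ^+ ((m - i.+1) * (n - 1)) =
  (-1) ^+ inv_exp (m + n - 1) * (-1) ^+ (i * (n - 1)) :> R.
Proof.
move=> m_gt0 n_gt0 lt_im; rewrite -!exprD inv_expD //.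
have -> : (m.-1 * n.-1 = (m - i.+1) * (n - 1) + i * (n - 1))%N.
  by rewrite -mulnDl; congr (_ * _)%N; lia.
set s := (i * (n - 1))%N.
by rewrite !addnA -[in RHS](addnA _ s s) [in RHS]exprD addnn -mul2n exprM sqrrN !expr1n mulr1.
Qed.

Definition gcirc (K : fieldType) (A : lmodType K) N m n
    (f : cochain A m) (g : cochain A n) : cochain A N :=
  fun a => \sum_(i < m) ((-1) ^+ (i * (n - 1)) : K) *: Defs.pcomp (N := N) f i g a.

Arguments gcirc {K A} N [m n] f g.

Section Cochains.
Variables (K : fieldType) (A : lmodType K).

Lemma upd_same n (a : 'I_n -> A) i : upd a i (a i) = a.
Proof. by apply: functional_extensionality => j; rewrite /upd; case: eqP => [->|]. Qed.

Lemma upd_except n (a b : 'I_n -> A) i :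
  (forall j, j != i -> a j = b j) -> a = upd b i (a i).
Proof.
move=> eq_ab; apply: functional_extensionality => j; rewrite /upd.
by case: eqP => [->|/eqP]; last exact: eq_ab.
Qed.

Lemma getarg_lt N (a : 'I_N -> A) k (lt_kN : (k < N)%N) : getarg a k = a (Ordinal lt_kN).
Proof. by rewrite /getarg insubT. Qed.

Lemma getarg_upd N (a : 'I_N -> A) t z k :
  getarg (upd a t z) k = if k == nat_of_ord t then z else getarg a k.
Proof.
rewrite /getarg /upd; case: insubP => [j _ <-|]; first by rewrite val_eqE.
by case: eqP => // ->; rewrite ltn_ord.
Qed.

Lemma multilinear_updZ n (f : cochain A n) a i k x :
  multilinear f -> f (upd a i (k *: x)) = k *: f (upd a i x).
Proof. by move=> f_ml; exact: (scalable_linear (f_ml i a)). Qed.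

Lemma multilinear_upd_linear n (f : cochain A n) b i (h : A -> A) :
  multilinear f -> linear h -> linear (fun z => f (upd b i (h z))).
Proof. by move=> f_ml h_lin k x y; rewrite h_lin f_ml. Qed.

Lemma multilinearD n (F G : cochain A n) :
  multilinear F -> multilinear G -> multilinear (fun a => F a + G a).
Proof. by move=> F_ml G_ml i a k x y; rewrite F_ml G_ml scalerDr addrACA. Qed.

Lemma multilinearB n (F G : cochain A n) :
  multilinear F -> multilinear G -> multilinear (fun a => F a - G a).
Proof. by move=> F_ml G_ml i a k x y; rewrite F_ml G_ml scalerBr opprD addrACA. Qed.

Lemma multilinearZ n (F : cochain A n) (c : K) :
  multilinear F -> multilinear (fun a => c *: F a).
Proof. by move=> F_ml i a k x y; rewrite F_ml scalerDr !scalerA mulrC. Qed.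

Lemma multilinear_sum n I (r : seq I) (F : I -> cochain A n) :
  (forall i, multilinear (F i)) -> multilinear (fun a => \sum_(i <- r) F i a).
Proof.
move=> F_ml; elim: r => [|i r IHr] j a k x y.
  by rewrite !big_nil scaler0 addr0.
by rewrite !big_cons; exact: (multilinearD (F_ml i) IHr).
Qed.

Definition pcomp_args N m n i (g : cochain A n) (a : 'I_N -> A) : 'I_m -> A :=
  fun j => if (j < i)%N then getarg a j
           else if j == i :> nat then g (fun l : 'I_n => getarg a (i + l))
           else getarg a (j + n - 1).

Lemma pcompE N m n (f : cochain A m) i (g : cochain A n) a :
  Defs.pcomp (N := N) f i g a = f (pcomp_args i g a).
Proof. by []. Qed.

(* The argument of [f] into which [a_t] enters in [f o_{i+1} g]. *)
Definition pcomp_slot n i t : nat :=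
  if (t < i)%N then t else if (t < i + n)%N then i else (t - n + 1)%N.

Lemma pcomp_args_upd_other N m n i (g : cochain A n) (a : 'I_N -> A) (t : 'I_N) z (j : 'I_m) :
  nat_of_ord j != pcomp_slot n i t -> pcomp_args i g (upd a t z) j = pcomp_args i g a j.
Proof.
have getarg_upd_other k : k != nat_of_ord t -> getarg (upd a t z) k = getarg a k.
  by move=> ne_kt; rewrite getarg_upd ifN.
rewrite /pcomp_slot /pcomp_args.
case: (ltnP t i) => [lt_ti|le_it]; [|case: (ltnP t (i + n)) => [lt_tin|le_tin]] => ne_j.
all: case: (ltnP j i) => [lt_ji|le_ij]; first by rewrite getarg_upd_other //; lia.
all: case: eqP => [eq_ji|ne_ji]; last by rewrite getarg_upd_other //; lia.
all: congr (g _); apply: functional_extensionality => l.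
all: by rewrite getarg_upd_other //; have := ltn_ord l; lia.
Qed.

Lemma pcomp_args_upd_slot N m n i (g : cochain A n) (a : 'I_N -> A) (t : 'I_N) (j : 'I_m) :
  multilinear g -> nat_of_ord j = pcomp_slot n i t ->
  linear (fun z => pcomp_args i g (upd a t z) j).
Proof.
move=> g_ml; rewrite /pcomp_slot /pcomp_args.
case: (ltnP t i) => [lt_ti|le_it]; [|case: (ltnP t (i + n)) => [lt_tin|le_tin]] => ->.
- by move=> k x y; rewrite lt_ti !getarg_upd eqxx.
- rewrite ltnn eqxx.
  have lt_tin' : (t - i < n)%N by lia.
  have E z : (fun l : 'I_n => getarg (upd a t z) (i + l)) =
             upd (fun l => getarg a (i + l)) (Ordinal lt_tin') z.
    apply: functional_extensionality => l; rewrite getarg_upd /upd -val_eqE /=.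
    by case: eqP => e1; case: eqP => e2 //; exfalso; lia.
  by move=> k x y /=; rewrite !E; exact: g_ml.
- have -> : (t - n + 1 < i)%N = false by lia.
  have -> : (t - n + 1 == i)%N = false by lia.
  have -> : (t - n + 1 + n - 1)%N = nat_of_ord t by lia.
  by move=> k x y; rewrite !getarg_upd eqxx.
Qed.

Lemma pcomp_multilinear N m n (f : cochain A m) (i : 'I_m) (g : cochain A n) :
  N = (m + n - 1)%N -> multilinear f -> multilinear g ->
  multilinear (Defs.pcomp (N := N) f i g).
Proof.
move=> eq_N f_ml g_ml t a.
have lt_slot : (pcomp_slot n i t < m)%N.
  rewrite /pcomp_slot; have := ltn_ord t; have := ltn_ord i.
  by case: (ltnP t i) => ? /=; [|case: (ltnP t (i + n)) => ? /=]; lia.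
pose j := Ordinal lt_slot.
have E z : pcomp_args i g (upd a t z) =
           upd (pcomp_args i g a) j (pcomp_args i g (upd a t z) j).
  apply: upd_except => j' ne_j'j; apply: pcomp_args_upd_other.
  by apply: contra ne_j'j => /eqP eq_j'; apply/eqP/val_inj.
move=> k x y; rewrite !pcompE (E (k *: x + y)) (E x) (E y).
exact: (multilinear_upd_linear _ _ f_ml (pcomp_args_upd_slot a (t := t) (j := j) g_ml erefl)).
Qed.

Lemma gbracketE m n (f : cochain A m) (g : cochain A n) a :
  gbracket f g a =
  gcirc (m + n - 1) f g a - ((-1) ^+ ((m - 1) * (n - 1)) : K) *: gcirc (m + n - 1) g f a.
Proof. by []. Qed.

Lemma gcirc_multilinear N m n (f : cochain A m) (g : cochain A n) :
  N = (m + n - 1)%N -> multilinear f -> multilinear g -> multilinear (gcirc N f g).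
Proof.
move=> eq_N f_ml g_ml; apply: multilinear_sum => i; apply: multilinearZ.
exact: pcomp_multilinear.
Qed.

End Cochains.

Section Involution.
Variables (K : fieldType) (A : lmodType K) (star : {linear A -> A}).

Definition rev_star N (a : 'I_N -> A) : 'I_N -> A := fun j => star (a (rev_ord j)).

Lemma getarg_rev_star N (a : 'I_N -> A) k :
  (k < N)%N -> star (getarg a (N - k.+1)) = getarg (rev_star a) k.
Proof.
move=> lt_kN; have lt_kN' : (N - k.+1 < N)%N by lia.
by rewrite (getarg_lt _ lt_kN) (getarg_lt _ lt_kN'); congr (star (a _)); exact: val_inj.
Qed.

Lemma pcomp_args_rev N m n (g : cochain A n) (a : 'I_N -> A) (i j : 'I_m) :
  N = (m + n - 1)%N -> j != rev_ord i ->
  star (pcomp_args i g a (rev_ord j)) = pcomp_args (rev_ord i) g (rev_star a) j.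
Proof.
move=> eq_N; rewrite -val_eqE /pcomp_args /= => ne_ji.
have := ltn_ord i; have := ltn_ord j => lt_jm lt_im.
case: (ltnP (m - j.+1) i) => [lt_ji|le_ij]; last case: eqP => [eq_ji|ne_ij].
- rewrite ifF; last by lia.
  rewrite ifF; last by lia.
  have -> : (m - j.+1 = N - (j + n - 1).+1)%N by lia.
  by apply: getarg_rev_star; lia.
- by exfalso; lia.
- rewrite ifT; last by lia.
  have -> : (m - j.+1 + n - 1 = N - j.+1)%N by lia.
  by apply: getarg_rev_star; lia.
Qed.

Lemma pcomp_args_rev_slot N m n (g : cochain A n) (a : 'I_N -> A) (i : 'I_m) :
  N = (m + n - 1)%N -> iC star g ->
  star (pcomp_args i g a i) =
  ((-1) ^+ inv_exp n : K) *: pcomp_args (rev_ord i) g (rev_star a) (rev_ord i).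
Proof.
move=> eq_N g_inv; rewrite /pcomp_args !ltnn !eqxx (proj2 g_inv).
congr (_ *: g _); apply: functional_extensionality => l /=.
have := ltn_ord i; have := ltn_ord l => lt_ln lt_im.
have -> : (i + (n - l.+1) = N - (m - i.+1 + l).+1)%N by lia.
by apply: getarg_rev_star; lia.
Qed.

Lemma pcomp_rev N m n (f : cochain A m) (g : cochain A n) (i : 'I_m) a :
  N = (m + n - 1)%N -> iC star f -> iC star g ->
  star (Defs.pcomp (N := N) f i g a) =
  ((-1) ^+ inv_exp m * (-1) ^+ inv_exp n : K) *:
    Defs.pcomp (N := N) f (rev_ord i) g (rev_star a).
Proof.
move=> eq_N f_inv g_inv; rewrite !pcompE (proj2 f_inv) -scalerA; congr (_ *: _).
set b := pcomp_args (rev_ord i) g (rev_star a).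
have -> : (fun j => star (pcomp_args i g a (rev_ord j))) =
          upd b (rev_ord i) ((-1) ^+ inv_exp n *: b (rev_ord i)).
  apply: functional_extensionality => j; rewrite /upd; case: eqP => [->|/eqP ne_j].
    by rewrite rev_ordK pcomp_args_rev_slot.
  exact: pcomp_args_rev.
by rewrite multilinear_updZ ?upd_same //; exact: (proj1 f_inv).
Qed.

Lemma gcirc_rev N m n (f : cochain A m) (g : cochain A n) a :
  (0 < m)%N -> (0 < n)%N -> N = (m + n - 1)%N -> iC star f -> iC star g ->
  star (gcirc N f g a) = ((-1) ^+ inv_exp N : K) *: gcirc N f g (rev_star a).
Proof.
move=> m_gt0 n_gt0 eq_N f_inv g_inv; subst N.
rewrite /gcirc linear_sum (reindex_inj rev_ord_inj) scaler_sumr; apply: eq_bigr => i _.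
rewrite linearZ_LR (pcomp_rev _ _ erefl f_inv g_inv) rev_ordK !scalerA.
by rewrite /= mulrC sign_rev_pcomp.
Qed.

Theorem gbracket_iC m n (f : cochain A m) (g : cochain A n) :
  (0 < m)%N -> (0 < n)%N -> iC star f -> iC star g -> iC star (gbracket f g).
Proof.
move=> m_gt0 n_gt0 f_inv g_inv.
have eq_nm : (m + n - 1 = n + m - 1)%N by rewrite addnC.
have [f_ml g_ml] := (proj1 f_inv, proj1 g_inv).
split.
  exact: (multilinearB (gcirc_multilinear erefl f_ml g_ml)
                       (multilinearZ _ (gcirc_multilinear eq_nm g_ml f_ml))).
move=> a; rewrite !gbracketE linearB linearZ_LR.
rewrite (gcirc_rev _ m_gt0 n_gt0 erefl f_inv g_inv) (gcirc_rev _ n_gt0 m_gt0 eq_nm g_inv f_inv).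
by rewrite scalerBr !scalerA mulrC.
Qed.

End Involution.

Unset Implicit Arguments. Set Strict Implicit.

Theorem mainTheorem1
  (K : fieldType) (charK0 : [pchar K] =i pred0)
  (A : lmodType K) (mul : A -> A -> A)
  (mul_linl : forall (k : K) (x y z : A), mul (k *: x + y) z = k *: mul x z + mul y z)
  (mul_linr : forall (k : K) (x y z : A), mul z (k *: x + y) = k *: mul z x + mul z y)
  (mulA : forall x y z : A, mul x (mul y z) = mul (mul x y) z)
  (star : A -> A)
  (star_lin : forall (k : K) (x y : A), star (k *: x + y) = k *: star x + star y)
  (starK : forall x : A, star (star x) = x)
  (star_mul : forall x y : A, star (mul x y) = mul (star y) (star x))
  (m n : nat) (hm : (1 <= m)%N) (hn : (1 <= n)%N)
  (f : cochain A m) (g : cochain A n)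
  (hf : iC star f) (hg : iC star g) :
  iC star (gbracket f g).
Proof.
pose star_linear : {linear A -> A} :=
  HB.pack star (GRing.isLinear.Build K A A *:%R star star_lin).
exact: (gbracket_iC (star := star_linear) hm hn hf hg).
Qed.
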